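(* Let $u$ be a parking sorted configuration on $K_{m,n}$ with $u_{a_m}\ge 0$, and let $r(u)=(r_1,\dots,r_n)$ be its $r$-vector. Write $u_{a_m}+1=nQ+R$ with $Q,R\in\mathbb N$ and $0\le R<n$. Then $$\mathrm{rank}(u)+1=\sum_{i=1}^n\max\{0,\;Q+\chi(i\le R)+r_i-1\},$$ where $\chi(\mathcal P)=1$ if the proposition $\mathcal P$ is true and $0$ otherwise.
   Context: Let $m,n\ge 1$. $K_{m,n}$ is the complete bipartite graph with vertex set $V=A_m\sqcup B_n$, $A_m=\{a_1,\dots,a_m\}$, $B_n=\{b_1,\dots,b_n\}$, with exactly one edge $\{a_i,b_j\}$ for every $i,j$; $a_m$ is the sink. A configuration is a function $u:V\to\mathbb Z$; $\mathrm{degree}(u)=\sum_c u_c$. For $c\in V$ with graph degree $d_c$ ($d_{a_i}=n$, $d_{b_j}=m$), $\Delta^{(c)}=d_c e_c-\sum_{c'\text{ adjacent to }c}e_{c'}$, with $e_c$ the indicator configuration of $c$; $\Delta^{(C)}=\sum_{c\in C}\Delta^{(c)}$. Toppling equivalence: difference is an integer combination of the $\Delta^{(c)}$. Effective: toppling equivalent to a non-negative configuration. $\mathrm{rank}(u)=-1+\min\{\mathrm{degree}(f): f\ge0,\ u-f\text{ not effective}\}$. A configuration $u$ is parking if $u_c\ge0$ for all $c\neq a_m$ and for every non-empty $C\subseteq V\setminus\{a_m\}$, $u-\Delta^{(C)}$ has a negative value at some vertex other than $a_m$. $u$ is sorted if $u_{a_1}\le\dots\le u_{a_{m-1}}$ and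 $u_{b_1}\le\dots\le u_{b_n}$ (no condition at the sink). For a configuration $u$ with $0\le u_{a_j}\le n-1$ ($j<m$) and $0\le u_{b_i}\le m-1$ that is sorted (in particular any parking sorted configuration), its $r$-vector is $r(u)=(r_1,\dots,r_n)$ with $r_i=u_{b_i}+1-\#\{j\in\{1,\dots,m-1\}: u_{a_j}+1\le i-1\}$; it does not depend on $u_{a_m}$. *)

From HB Require Import structures.
From mathcomp Require Import all_boot all_order all_algebra.
Set Implicit Arguments. Unset Strict Implicit. Unset Printing Implicit Defensive.
Import Order.TTheory GRing.Theory Num.Theory.
Local Open Scope ring_scope.

(* Vertices of K_{m,n}: inl i = a_{i+1} (i < m), inr j = b_{j+1} (j < n).
   The sink a_m is inl i with val i = m - 1. *)
Notation vert m n := ('I_m + 'I_n)%type.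

Definition config (m n : nat) := vert m n -> int.

Definition is_sink (m n : nat) (c : vert m n) : bool :=
  match c with inl i => (val i == m.-1)%N | inr _ => false end.

Definition adj (m n : nat) (c x : vert m n) : bool :=
  match c, x with
  | inl _, inr _ => true
  | inr _, inl _ => true
  | _, _ => false
  end.

Definition gdeg (m n : nat) (c : vert m n) : int :=
  match c with inl _ => n%:Z | inr _ => m%:Z end.

Definition degree (m n : nat) (u : config m n) : int := \sum_(c : vert m n) u c.

Definition Delta (m n : nat) (c : vert m n) : config m n :=
  fun x => (if x == c then gdeg c else 0) - (adj c x)%:Z.

Definition DeltaS (m n : nat) (C : {set vert m n}) : config m n :=
  fun x => \sum_(c in C) Delta c x.

Definition topp_equiv (m n : nat) (u v : config m n) : Prop :=
  exists z : vert m n -> int,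
    forall x, u x - v x = \sum_(c : vert m n) z c * Delta c x.

Definition effective (m n : nat) (u : config m n) : Prop :=
  exists f : config m n, (forall x, 0 <= f x) /\ topp_equiv u f.

(* rank_is u k  <->  rank(u) = k, i.e.
   k + 1 = min { degree f : f >= 0, u - f not effective }. *)
Definition rank_is (m n : nat) (u : config m n) (k : int) : Prop :=
  (exists f : config m n, (forall x, 0 <= f x) /\
      ~ effective (fun x => u x - f x) /\ degree f = k + 1) /\
  (forall f : config m n, (forall x, 0 <= f x) ->
      ~ effective (fun x => u x - f x) -> k + 1 <= degree f).

Definition parking (m n : nat) (u : config m n) : Prop :=
  (forall c, ~~ is_sink c -> 0 <= u c) /\
  (forall C : {set vert m n}, C != set0 -> (forall c, c \in C -> ~~ is_sink c) ->
     exists c, ~~ is_sink c /\ u c - DeltaS C c < 0).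

Definition sorted_config (m n : nat) (u : config m n) : Prop :=
  (forall i j : 'I_m, (i <= j)%N -> (j < m.-1)%N -> u (inl i) <= u (inl j)) /\
  (forall i j : 'I_n, (i <= j)%N -> u (inr i) <= u (inr j)).

(* r-vector, 0-indexed: r (j : 'I_n) is r_{j+1}
   = u_{b_{j+1}} + 1 - #{ i in 1..m-1 : u_{a_i} + 1 <= j }. *)
Definition rvec (m n : nat) (u : config m n) (j : 'I_n) : int :=
  u (inr j) + 1 -
  (#|[set i : 'I_m | (val i < m.-1)%N && (u (inl i) + 1 <= (val j)%:Z)]|)%:Z.

From HB Require Import structures.
From mathcomp Require Import all_boot all_order all_algebra.
From mathcomp Require Import zify ring.
Import Order.TTheory GRing.Theory Num.Theory.
Local Open Scope ring_scope.
Set Implicit Arguments.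
Unset Strict Implicit.

(* If the b-vertices fire B times in total, the a-vertices can fire at most
   [fire_a w B] times without going negative, and symmetrically; so w is
   effective iff B <= fire_b w (fire_a w B) for some B, and by periodicity only
   B in (-n, 0] matter.  Write phi_w(i) = fire_a w (-i).  Adding
   max(0, u_{b_j} + 1 + phi_u(j)) chips on every b_j makes u non-effective, so
   rank(u) + 1 is at most the sum of these numbers.  Conversely, if u - f is not
   effective, the b-values of u - f lie, for every i, at least i + 1 periods of m
   below -phi_{u-f}(i) in total; an exchange argument bounds their sum, and
   Hermite's identity sum_i phi_w(i) = sum_a w_a - m(n-1) turns that bound into
   deg f >= the same sum.  For a parking sorted u the j-th summand is exactly
   Q + chi(j < R) + r_j - 1. *)

Lemma sum_ord_const (n : nat) (c : int) : \sum_(l < n) c = n%:Z * c.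
Proof. by rewrite sumr_const card_ord -mulr_natl natz. Qed.

Lemma sum_update (T : finType) (F : T -> int) (a : T) (v : int) :
  \sum_x (if x == a then v else F x) = \sum_x F x - F a + v.
Proof.
rewrite (bigD1 a) //= eqxx [in RHS](bigD1 a) //=.
by rewrite (eq_bigr F) => [|x /negbTE ->]; first ring.
Qed.

Lemma sum_ord_update (N a : nat) (F : nat -> int) (v : int) : (a < N)%N ->
  \sum_(x < N) (if (x : nat) == a then v else F x) = \sum_(x < N) F x - F a + v.
Proof. by move=> lt_aN; exact: (sum_update (fun x : 'I_N => F x) (Ordinal lt_aN)). Qed.

Lemma sum_drop (n k : nat) (g : int -> int) (e : nat -> int) : (k <= n)%N ->
  \sum_(l < n) g (if (l : nat) == k then e n else e l) + g (e k) = \sum_(l < n.+1) g (e l).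
Proof.
move=> le_kn; under eq_bigr do rewrite fun_if.
rewrite big_ord_recr /=; case: (ltnP k n) => [lt_kn|le_nk].
  by rewrite (sum_ord_update (g \o e)) //=; ring.
have -> : k = n by apply/eqP; rewrite eqn_leq le_kn.
by congr (_ + _); apply: eq_bigr => l _; rewrite ltn_eqF.
Qed.

Lemma exists_argmax (f : nat -> int) (n : nat) :
  exists2 k, (k <= n)%N & forall l, (l <= n)%N -> f l <= f k.
Proof.
elim: n => [|n [k le_kn f_max]]; first by exists 0%N => // l; rewrite leqn0 => /eqP ->.
have [le_fk|lt_fk] := lerP (f n.+1) (f k).
  exists k => [|l]; first exact: leqW.
  by rewrite leq_eqVlt => /predU1P [->|/f_max].
exists n.+1 => // l; rewrite leq_eqVlt => /predU1P [->//|/f_max le_fl].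
exact: le_trans le_fl (ltW lt_fk).
Qed.

Lemma sum_ltn_indicator (n r : nat) : (r < n)%N ->
  \sum_(i < n) (if (r < i)%N then 1 else 0 : int) = (n - r.+1)%N%:Z.
Proof.
elim: n => [//|n IHn] lt_rn; rewrite big_ord_recr /=.
have [lt_rn'|le_nr] := ltnP r n; first by rewrite IHn //; lia.
have -> : r = n by apply/eqP; rewrite eqn_leq le_nr -ltnS lt_rn.
by rewrite big1 => [|i _]; [rewrite subnn | rewrite ltnNge ltnW].
Qed.

Lemma sum_divz_sub (n : nat) (x : int) : (0 < n)%N ->
  \sum_(i < n) ((x - i%:Z) %/ n%:Z)%Z = x - n.-1%:Z.
Proof.
move=> n_gt0; set q := (x %/ n%:Z)%Z.
have [r lt_rn xE] : exists2 r : nat, (r < n)%N & x = q * n%:Z + r%:Z.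
  by exists (absz (x %% n%:Z)%Z); rewrite /q; nia.
clearbody q.
rewrite (eq_bigr (fun i : 'I_n => q - (if (r < i)%N then 1 else 0))) => [|i _].
  by rewrite sumrB sum_ord_const sum_ltn_indicator //; lia.
by have := ltn_ord i; rewrite xE; case: (ltnP r i) => ? ?; nia.
Qed.

Lemma divz_sub_step (n i j : nat) (x : int) : (0 < n)%N -> (i <= j)%N -> (j <= i + n)%N ->
  0 <= ((x - i%:Z) %/ n%:Z)%Z - ((x - j%:Z) %/ n%:Z)%Z <= 1.
Proof. by move=> *; apply/andP; split; nia. Qed.

Lemma le_divz_of_sub (d : nat) (x y f s : int) : (0 < d)%N -> 0 <= f ->
  y - f = d%:Z * x - s -> x <= ((y + s) %/ d%:Z)%Z.
Proof. by move=> d_gt0 f_ge0 yE; rewrite lez_divRL ?ltz_nat // mulrC; lia. Qed.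

Section ExchangeArgument.

Variables (m : nat) (E t : nat -> int).
Hypothesis m_gt0 : (0 < m)%N.

Definition deficient (n : nat) (e : nat -> int) : Prop :=
  (forall l, (l < n)%N -> e l <= E l) /\
  (forall i, (i < n)%N -> \sum_(l < n) ((e l - t i) %/ m%:Z)%Z < - i%:Z).

Lemma deficient_drop_max n e k :
  deficient n.+1 e -> (k <= n)%N -> (forall l, (l <= n)%N -> e l <= e k) -> e k < t n ->
  deficient n (fun l => if l == k then e n else e l).
Proof.
move=> [e_le_E e_def] le_kn e_max lt_ekt; split=> [l lt_ln|i lt_in].
  case: eqP => [->|_]; last exact/e_le_E/ltnW.
  exact: le_trans (e_max n (leqnn n)) (e_le_E k le_kn).
have := e_def i (ltnW lt_in).
rewrite -(sum_drop (fun x => ((x - t i) %/ m%:Z)%Z) e le_kn) /=.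
have [le_ti_ek|lt_ek_ti] := lerP (t i) (e k).
  have : 0 <= ((e k - t i) %/ m%:Z)%Z by nia.
  lia.
have : \sum_(l < n) (((if (l : nat) == k then e n else e l) - t i) %/ m%:Z)%Z <=
       \sum_(l < n) (-1 : int).
  apply: ler_sum => l _; have : (if (l : nat) == k then e n else e l) <= e k.
    by case: eqP => _; apply: e_max => //; apply: ltnW.
  nia.
rewrite sum_ord_const; set S := \sum_(l < n) _; lia.
Qed.

Lemma deficient_exchange n e k :
  (forall i j, (i < n.+1)%N -> (j < n.+1)%N -> E j <= E i + m%:Z) ->
  deficient n.+1 e -> (k <= n)%N -> (forall l, (l <= n)%N -> e l <= e k) -> t n <= e k ->
  exists e', [/\ deficient n.+1 e', \sum_(l < n.+1) e' l = \sum_(l < n.+1) e l &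
    \sum_(l < n.+1) e' l ^+ 2 < \sum_(l < n.+1) e l ^+ 2].
Proof.
move=> E_spread [e_le_E e_def] le_kn e_max le_tek.
have lt_kn : (k < n.+1)%N := le_kn.
(* e k contributes a nonnegative floor, so deficiency at n forces a floor <= -2. *)
have /existsP [l lt_elt] : [exists l : 'I_n.+1, e l + m%:Z < t n].
  apply: contraT => /existsPn high.
  have := e_def n (ltnSn n); rewrite (bigD1 (Ordinal lt_kn)) //=.
  have : \sum_(l < n.+1 | l != Ordinal lt_kn) (-1 : int) <=
         \sum_(l < n.+1 | l != Ordinal lt_kn) ((e l - t n) %/ m%:Z)%Z.
    by apply: ler_sum => l _; have := high l; rewrite -leNgt; nia.
  rewrite sumr_const cardC1 card_ord -mulr_natl natz /=.
  have : 0 <= ((e k - t n) %/ m%:Z)%Z by nia.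
  set S := \sum_(l < n.+1 | _) _; lia.
have neq_kl : k != l by apply/eqP => eq_kl; move: lt_elt le_tek; rewrite -eq_kl; lia.
pose e' (x : nat) : int :=
  if x == k then e l + m%:Z else if x == (l : nat) then e k - m%:Z else e x.
have sum_e' (g : int -> int) : \sum_(x < n.+1) g (e' x) =
    \sum_(x < n.+1) g (e x) - g (e l) - g (e k) + g (e k - m%:Z) + g (e l + m%:Z).
  rewrite /e'; under eq_bigr => x _ do rewrite fun_if (fun_if g).
  rewrite (sum_ord_update (fun x : nat => if x == (l : nat) then g (e k - m%:Z) else g (e x))) //.
  rewrite (negbTE neq_kl).
  by rewrite (sum_ord_update (g \o e)) //=; ring.
exists e'; split; last 2 first.
- by rewrite (sum_e' id) /=; ring.
- rewrite (sum_e' (fun x => x ^+ 2)) /=; set S := \sum_(x < n.+1) _; nia.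
split=> [x lt_xn|i lt_in].
  have := e_le_E k lt_kn; have := E_spread l k (ltn_ord l) lt_kn.
  rewrite /e'; case: eqP => [->|_]; first lia.
  case: eqP => [->|_]; [lia | by move=> *; apply: e_le_E].
rewrite (sum_e' (fun x => ((x - t i) %/ m%:Z)%Z)) /=.
have -> : ((e k - m%:Z - t i) %/ m%:Z)%Z = ((e k - t i) %/ m%:Z)%Z - 1 by nia.
have -> : ((e l + m%:Z - t i) %/ m%:Z)%Z = ((e l - t i) %/ m%:Z)%Z + 1 by nia.
have := e_def i lt_in; set S := \sum_(x < n.+1) _; lia.
Qed.

(* Induction on n and, inside, on the sum of squares: a maximal value below t n
   is dropped together with the index n, otherwise [deficient_exchange] applies. *)
Lemma deficient_sum_le n e :
  (forall i j, (i <= j)%N -> (j < n)%N -> E i <= E j) ->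
  (forall i j, (i < n)%N -> (j < n)%N -> E j <= E i + m%:Z) ->
  deficient n e -> \sum_(l < n) e l + n%:Z <= \sum_(i < n) Num.min (E i + 1) (t i).
Proof.
elim: n e => [|n IHn] e E_mono E_spread; first by rewrite !big_ord0.
have [N] := ubnP (absz (\sum_(l < n.+1) e l ^+ 2)).
elim: N e => // N IHN e lt_sqN e_def.
have [k le_kn e_max] := exists_argmax e n.
have [lt_ekt|le_tek] := ltrP (e k) (t n).
  have := IHn _ (fun i j le_ij lt_jn => E_mono i j le_ij (leqW lt_jn))
    (fun i j lt_in lt_jn => E_spread i j (leqW lt_in) (leqW lt_jn))
    (deficient_drop_max e_def le_kn e_max lt_ekt).
  rewrite -(sum_drop id e le_kn) big_ord_recr /=.
  have : e k <= E n := le_trans (e_def.1 k le_kn) (E_mono k n le_kn (ltnSn n)).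
  by set S := \sum_(l < n) _; set M := \sum_(i < n) _; lia.
have [e' [e'_def e'_sum e'_sq]] := deficient_exchange E_spread e_def le_kn e_max le_tek.
rewrite -e'_sum; apply: IHN e'_def.
have : 0 <= \sum_(l < n.+1) e' l ^+ 2 by apply: sumr_ge0 => l _; apply: sqr_ge0.
move: e'_sq lt_sqN; set S' := \sum_(l < n.+1) e' l ^+ 2; set S := \sum_(l < n.+1) e l ^+ 2.
by lia.
Qed.

End ExchangeArgument.

Definition nat_ext (n : nat) (g : 'I_n -> int) (l : nat) : int := oapp g 0 (insub l).

Lemma nat_ext_ord (n : nat) (g : 'I_n -> int) (j : 'I_n) : nat_ext g j = g j.
Proof. by rewrite /nat_ext valK. Qed.

Lemma nat_ext_lt (n : nat) (g : 'I_n -> int) (l : nat) (lt_ln : (l < n)%N) :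
  nat_ext g l = g (Ordinal lt_ln).
Proof. by rewrite /nat_ext insubT. Qed.

Lemma deficient_sum_le_ord (m n : nat) (e E t : 'I_n -> int) : (0 < m)%N ->
  (forall i j : 'I_n, (i <= j)%N -> E i <= E j) ->
  (forall i j : 'I_n, E j <= E i + m%:Z) ->
  (forall l, e l <= E l) ->
  (forall i : 'I_n, \sum_l ((e l - t i) %/ m%:Z)%Z < - (i : nat)%:Z) ->
  \sum_l e l + n%:Z <= \sum_i Num.min (E i + 1) (t i).
Proof.
move=> m_gt0 E_mono E_spread e_le_E e_def.
have -> : \sum_l e l = \sum_(l < n) nat_ext e l.
  by apply: eq_bigr => l _; rewrite nat_ext_ord.
have -> : \sum_i Num.min (E i + 1) (t i) =
          \sum_(i < n) Num.min (nat_ext E i + 1) (nat_ext t i).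
  by apply: eq_bigr => i _; rewrite !nat_ext_ord.
apply: (deficient_sum_le m_gt0) => // [i j le_ij lt_jn|i j lt_in lt_jn|].
- by rewrite (nat_ext_lt _ lt_jn) (nat_ext_lt _ (leq_ltn_trans le_ij lt_jn)); apply: E_mono.
- by rewrite (nat_ext_lt _ lt_in) (nat_ext_lt _ lt_jn).
split=> [l lt_ln|i lt_in]; first by rewrite !(nat_ext_lt _ lt_ln).
under eq_bigr => l _ do rewrite !nat_ext_ord; rewrite (nat_ext_lt _ lt_in).
exact: (e_def (Ordinal lt_in)).
Qed.

Section Firing.

Variables (m n : nat).
Implicit Types (u w : config m n) (z : vert m n -> int).

Lemma degree_split w : degree w = \sum_i w (inl i) + \sum_j w (inr j).
Proof. by rewrite /degree big_sumType. Qed.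

Lemma sum_Delta_inl z (i : 'I_m) :
  \sum_c z c * Delta c (inl i) = n%:Z * z (inl i) - \sum_j z (inr j).
Proof.
rewrite big_sumType /= (bigD1 i) //= big1 => [|i' neq_i'i].
  rewrite /Delta /= (inj_eq (@inl_inj _ _)) eqxx -sumrN.
  by rewrite (eq_bigr (fun j => - z (inr j))) => [|j _]; rewrite /Delta /=; ring.
by rewrite /Delta /= (inj_eq (@inl_inj _ _)) eq_sym (negbTE neq_i'i); ring.
Qed.

Lemma sum_Delta_inr z (j : 'I_n) :
  \sum_c z c * Delta c (inr j) = m%:Z * z (inr j) - \sum_i z (inl i).
Proof.
rewrite big_sumType /= [X in _ + X](bigD1 j) //= [X in _ + (_ + X)]big1 => [|j' neq_j'j].
  rewrite /Delta /= (inj_eq (@inr_inj _ _)) eqxx -sumrN.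
  by rewrite (eq_bigr (fun i => - z (inl i))) => [|i _]; rewrite /Delta /=; ring.
by rewrite /Delta /= (inj_eq (@inr_inj _ _)) eq_sym (negbTE neq_j'j); ring.
Qed.

(* [fire_a w B] is the largest total number of firings of the a-vertices that
   keeps them nonnegative when the b-vertices fire B times in total. *)
Definition fire_a w (B : int) : int := \sum_(i : 'I_m) ((w (inl i) + B) %/ n%:Z)%Z.
Definition fire_b w (A : int) : int := \sum_(j : 'I_n) ((w (inr j) + A) %/ m%:Z)%Z.

Definition rank_sum w : int :=
  \sum_(j : 'I_n) Num.max 0 (w (inr j) + 1 + fire_a w (- (j : nat)%:Z)).

Hypotheses (m_gt0 : (0 < m)%N) (n_gt0 : (0 < n)%N).

Lemma fire_a_mono w w' B : (forall i, w (inl i) <= w' (inl i)) -> fire_a w B <= fire_a w' B.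
Proof. by move=> le_ww'; apply: ler_sum => i _; have := le_ww' i; nia. Qed.

Lemma fire_b_mono w : {homo fire_b w : A A' / A <= A'}.
Proof. by move=> A A' le_AA'; apply: ler_sum => j _; nia. Qed.

Lemma fire_a_shift w B k : fire_a w (B + n%:Z * k) = fire_a w B + m%:Z * k.
Proof.
rewrite /fire_a -(sum_ord_const m) -big_split /=.
by apply: eq_bigr => i _; nia.
Qed.

Lemma fire_b_shift w A k : fire_b w (A + m%:Z * k) = fire_b w A + n%:Z * k.
Proof.
rewrite /fire_b -(sum_ord_const n) -big_split /=.
by apply: eq_bigr => j _; nia.
Qed.

Lemma fire_a_step w (i j : nat) : (i <= j)%N -> (j < n)%N ->
  0 <= fire_a w (- i%:Z) - fire_a w (- j%:Z) <= m%:Z.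
Proof.
move=> le_ij lt_jn.
have step a := divz_sub_step (w (inl a)) n_gt0 le_ij (ltnW (ltn_addl i lt_jn)).
rewrite /fire_a -sumrB; apply/andP; split.
  by apply: sumr_ge0 => a _; case/andP: (step a).
by rewrite -[m%:Z]mulr1 -sum_ord_const; apply: ler_sum => a _; case/andP: (step a).
Qed.

Lemma sum_fire_a w : \sum_(i < n) fire_a w (- i%:Z) = \sum_i w (inl i) - m%:Z * n.-1%:Z.
Proof.
rewrite /fire_a exchange_big /=.
under eq_bigr => i _ do rewrite sum_divz_sub //.
by rewrite sumrB sum_ord_const.
Qed.

Lemma effectiveP w : effective w <-> exists B, B <= fire_b w (fire_a w B).
Proof.
split=> [[f [f_ge0 [z wE]]]|[B le_B]].
  exists (\sum_j z (inr j)); apply: le_trans (fire_b_mono w (_ : \sum_i z (inl i) <= _)).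
    apply: ler_sum => j _; apply: le_divz_of_sub m_gt0 (f_ge0 (inr j)) _.
    by rewrite wE sum_Delta_inr.
  apply: ler_sum => i _; apply: le_divz_of_sub n_gt0 (f_ge0 (inl i)) _.
  by rewrite wE sum_Delta_inl.
(* Fire every a-vertex as often as possible, and the b-vertices exactly B times. *)
set A := fire_a w B; pose j0 : 'I_n := Ordinal n_gt0.
pose z c := match c with
  | inl i => ((w (inl i) + B) %/ n%:Z)%Z
  | inr j => ((w (inr j) + A) %/ m%:Z)%Z - (if j == j0 then fire_b w A - B else 0) end.
have sum_za : \sum_i z (inl i) = A by [].
have sum_zb : \sum_j z (inr j) = B.
  by rewrite sumrB -big_mkcond big_pred1_eq -/(fire_b w A); ring.
exists (fun x => w x - \sum_c z c * Delta c x); split; last by exists z => x; ring.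
case=> [i|j]; rewrite ?sum_Delta_inl ?sum_Delta_inr ?sum_za ?sum_zb subr_ge0 lerBlDr.
  by rewrite mulrC -lez_divRL ?ltz_nat.
by rewrite mulrC -lez_divRL ?ltz_nat //= gerBl; case: eqP => _; rewrite ?subr_ge0.
Qed.

Lemma not_effectiveP w : ~ effective w <-> forall B, fire_b w (fire_a w B) < B.
Proof.
split=> [not_eff B|lt_B /effectiveP [B]]; last by rewrite leNgt lt_B.
by rewrite ltNge; apply/negP => le_B; apply: not_eff; apply/effectiveP; exists B.
Qed.

Lemma not_effective_window w :
  (forall i, (i < n)%N -> fire_b w (fire_a w (- i%:Z)) < - i%:Z) -> ~ effective w.
Proof.
move=> lt_window; apply/not_effectiveP => B.
have [k [i lt_in ->]] : exists k, exists2 i : nat, (i < n)%N & B = - i%:Z + n%:Z * k.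
  by exists (- ((- B) %/ n%:Z)%Z), (absz ((- B) %% n%:Z)%Z); nia.
by rewrite fire_a_shift fire_b_shift ltrD2r; apply: lt_window.
Qed.

Lemma rank_sum_witness u : exists f : config m n,
  [/\ forall x, 0 <= f x, ~ effective (fun x => u x - f x) & degree f = rank_sum u].
Proof.
pose f : config m n := fun x => match x with
  | inl _ => 0
  | inr j => Num.max 0 (u (inr j) + 1 + fire_a u (- (j : nat)%:Z)) end.
exists f; split=> [[//|j]||]; first by rewrite /= le_max lexx.
  apply: not_effective_window => i lt_in.
  have -> : fire_a (fun x => u x - f x) (- i%:Z) = fire_a u (- i%:Z).
    by apply: eq_bigr => a _; rewrite /= subr0.
  have : fire_b (fun x => u x - f x) (fire_a u (- i%:Z)) <=
         \sum_(j : 'I_n) ((if (i < j)%N then 1 else 0) - 1).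
    apply: ler_sum => j _ /=; have [lt_ij|le_ji] := ltnP i j.
      have := fire_a_step u (ltnW lt_ij) (ltn_ord j); nia.
    have := fire_a_step u le_ji lt_in; nia.
  by rewrite sumrB sum_ltn_indicator // sum_ord_const; lia.
by rewrite degree_split big1 ?add0r.
Qed.

Lemma rank_sum_le_degree u f :
  (forall j, 0 <= u (inr j) < m%:Z) ->
  (forall i j : 'I_n, (i <= j)%N -> u (inr i) <= u (inr j)) ->
  (forall x, 0 <= f x) -> ~ effective (fun x => u x - f x) -> rank_sum u <= degree f.
Proof.
move=> u_b u_sorted f_ge0 /not_effectiveP; set w : config m n := fun x => u x - f x => w_low.
have le_wu x : w x <= u x by rewrite /w gerBl.
have key : \sum_j w (inr j) + n%:Z <=
           \sum_(j : 'I_n) Num.min (u (inr j) + 1) (- fire_a w (- (j : nat)%:Z)).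
  apply: (deficient_sum_le_ord m_gt0 u_sorted) => [i j|j|i].
  - by have := u_b i; have := u_b j; lia.
  - exact: le_wu.
  - by under eq_bigr => j _ do rewrite opprK; exact: w_low.
have -> : degree f = \sum_(i < n) fire_a u (- i%:Z) - \sum_(i < n) fire_a w (- i%:Z)
                     + \sum_j u (inr j) - \sum_j w (inr j).
  rewrite !sum_fire_a degree_split.
  under eq_bigr => i _ do rewrite -[f _](subKr (u (inl i))).
  under [X in _ + X]eq_bigr => j _ do rewrite -[f _](subKr (u (inr j))).
  by rewrite !sumrB; ring.
apply: le_trans (_ : _ <= \sum_(j : 'I_n) (fire_a u (- (j : nat)%:Z) - fire_a w (- (j : nat)%:Z)
    + u (inr j) + 1 - Num.min (u (inr j) + 1) (- fire_a w (- (j : nat)%:Z)))) _.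
  apply: ler_sum => j _.
  by have := fire_a_mono (- (j : nat)%:Z) (fun i => le_wu (inl i)); lia.
move: key; set M := \sum_(j : 'I_n) Num.min _ _; set Sw := \sum_j w (inr j).
rewrite !(sumrB, big_split) /= sum_ord_const.
set Sa := \sum_(j : 'I_n) fire_a u _; set Sa' := \sum_(j : 'I_n) fire_a w _.
set Su := \sum_(j : 'I_n) u _; rewrite -/M; lia.
Qed.

End Firing.

Lemma parking_lt_gdeg (m n : nat) (u : config m n) (c : vert m n) :
  parking u -> ~~ is_sink c -> 0 <= u c < gdeg c.
Proof.
move=> [u_ge0 u_park] c_ns; rewrite u_ge0 //=.
have [||x [x_ns]] := u_park [set c]; first by apply/set0Pn; exists c; rewrite in_set1.
  by move=> x /set1P ->.
rewrite /DeltaS big_set1 /Delta; have := u_ge0 x x_ns.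
have [->|_] := eqVneq x c; last by case: (adj c x) => /=; lia.
by case: c {x_ns c_ns} => /= c; lia.
Qed.

Lemma card_setE (T : finType) (P : pred T) :
  (#|[set x | P x]|)%:Z = \sum_x (if P x then 1 else 0 : int).
Proof.
rewrite cardsE -sum1_card -natz natr_sum big_mkcond /=.
by apply: eq_bigr => x _; rewrite unfold_in; case: (P x).
Qed.

Lemma rank_term_parking (m n : nat) (u : config m n) (sink : 'I_m) (Q R : nat) (j : 'I_n) :
  val sink = m.-1 -> (forall a, a != sink -> 0 <= u (inl a) < n%:Z) ->
  u (inl sink) + 1 = (n * Q + R)%N%:Z -> (R < n)%N ->
  Q%:Z + ((j < R)%N)%:Z + rvec u j - 1 = u (inr j) + 1 + fire_a u (- (j : nat)%:Z).
Proof.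
move=> sinkE u_a uQR lt_Rn.
have sum_sink : fire_a u (- (j : nat)%:Z) +
    (#|[set a : 'I_m | (val a < m.-1)%N && (u (inl a) + 1 <= (val j)%:Z)]|)%:Z =
    ((u (inl sink) - (j : nat)%:Z) %/ n%:Z)%Z.
  rewrite card_setE /fire_a -big_split /= (bigD1 sink) //= sinkE ltnn addr0.
  rewrite big1 ?addr0 // => a neq_as.
  have lt_am : (val a < m.-1)%N.
    have : val a != m.-1 by rewrite -sinkE (inj_eq val_inj).
    by have : (val a < m)%N := ltn_ord a; lia.
  by have := u_a a neq_as; have := ltn_ord j; rewrite lt_am /=; case: ifP; nia.
move: sum_sink; rewrite /rvec; have := ltn_ord j; case: (ltnP j R) => ? ? ?; nia.
Qed.

Theorem theorem11p1 (m n : nat) (hm : (1 <= m)%N) (hn : (1 <= n)%N)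
  (u : config m n) (sink : 'I_m) (hsink : val sink = m.-1)
  (hpark : parking u) (hsort : sorted_config u)
  (hnn : 0 <= u (inl sink))
  (Q R : nat) (hQR : u (inl sink) + 1 = (n * Q + R)%N%:Z) (hR : (R < n)%N) :
  rank_is u ((\sum_(i < n)
      Num.max 0 (Q%:Z + ((i < R)%N)%:Z + rvec u i - 1)) - 1).
Proof.
have u_a a : a != sink -> 0 <= u (inl a) < n%:Z.
  move=> neq_as; apply: (parking_lt_gdeg hpark).
  by rewrite /= -hsink (inj_eq val_inj).
have u_b j : 0 <= u (inr j) < m%:Z := parking_lt_gdeg hpark (isT : ~~ is_sink (inr j)).
have -> : \sum_(i < n) Num.max 0 (Q%:Z + ((i < R)%N)%:Z + rvec u i - 1) = rank_sum u.
  by apply: eq_bigr => j _; rewrite (rank_term_parking _ hsink).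
rewrite /rank_is subrK; split.
  by have [f [f_ge0 not_eff deg_f]] := rank_sum_witness hm hn u; exists f.
by move=> f f_ge0 not_eff; exact: (rank_sum_le_degree hm hn u_b hsort.2 f_ge0 not_eff).
Qed.
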